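(* Let $K$ be an infinite field, $n\ge 1$, $d \ge 1$, and let $G \subseteq S_{n+1}$ be a subgroup acting transitively on the variables $x_0,\dots,x_n$. Let $X \subseteq \mathbb{P}^n_K$ be a general hypersurface of degree $d$, viewed as a $K$-rational point of $\mathbb{P}(K[x_0,\dots,x_n]_d)$ (i.e., $X = \mathcal{V}(f)$ with $f$ a homogeneous polynomial of degree $d$ whose coefficients lie in a suitable non-empty Zariski-open subset). Then $$\bigcap_{\sigma \in G} \sigma(X) = \emptyset.$$ In particular, for $G=\mathbb{Z}/(n+1)\mathbb{Z}$ acting by cyclic permutation of the variables, the $n+1$ cyclic permutations of a general homogeneous polynomial of degree $d$ form a homogeneous system of parameters of $K[x_0,\dots,x_n]$.
   Context: $S_{n+1}$ acts on $K[x_0,\dots,x_n]$ by permuting the variables, and hence on $\mathbb{P}^n_K$ and on hypersurfaces: $\sigma(\mathcal{V}(f)) = \mathcal{V}(\sigma.f)$. *)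

From HB Require Import structures.
From mathcomp Require Import all_boot all_order all_algebra all_fingroup.
From mathcomp Require Import mpoly.
Set Implicit Arguments. Unset Strict Implicit. Unset Printing Implicit Defensive.
Import GRing.Theory.
Local Open Scope ring_scope.

Definition infinite_type (T : eqType) := forall s : seq T, exists x, x \notin s.

(* Monomials of degree exactly d in the n.+1 variables x_0..x_n:
   they index the coordinates of K[x_0..x_n]_d. *)
Definition Mon (n d : nat) := {m : 'X_{1..n.+1 < d.+1} | mdeg (bmnm m) == d}.

Definition coeffs (K : fieldType) (n d : nat) (f : {mpoly K[n.+1]})
  : 'I_#|{: Mon n d}| -> K :=
  fun i => f@_(bmnm (val (enum_val i))).

(* sigma.f : substitute x_i |-> x_(sigma i) *)
Definition pact (K : fieldType) (n : nat) (s : 'S_n.+1) (f : {mpoly K[n.+1]}) :=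
  msym s f.

(* The scheme-theoretic intersection of the hypersurfaces V(g_j) (g_j homogeneous)
   in P^n_K is empty: it has no L-point for any field extension L of K. *)
Definition proj_common_zeros_empty (K : fieldType) (n : nat) (I : Type)
  (g : I -> {mpoly K[n.+1]}) :=
  forall (L : fieldType) (iota : {rmorphism K -> L}) (v : 'I_n.+1 -> L),
    (forall j, (map_mpoly iota (g j)).@[v] = 0) -> forall i, v i = 0.

Definition in_ideal (K : fieldType) (n r : nat) (th : 'I_r -> {mpoly K[n.+1]})
  (p : {mpoly K[n.+1]}) :=
  exists g : 'I_r -> {mpoly K[n.+1]}, p = \sum_(i < r) g i * th i.

(* homogeneous system of parameters of K[x_0..x_n] (which has Krull dimension n+1):
   n+1 homogeneous elements of positive degree generating an ideal whose radical
   is the irrelevant ideal (equivalently K[x] is finite over K[theta]). *)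
Definition hsop (K : fieldType) (n : nat) (th : 'I_n.+1 -> {mpoly K[n.+1]}) :=
  (forall i, exists e, (0 < e)%N /\ th i \is e.-homog) /\
  (forall j : 'I_n.+1, exists N : nat, in_ideal th ('X_j ^+ N)).

Definition cshift (n : nat) : 'S_n.+1 := perm (@ordS_inj n.+1).

(* The proof is a Macaulay-resultant argument.  Put N = (n+1)d.  Every
   monomial x of degree N has a "pivot" variable x_i with exponent >= d
   (pigeonhole); fix a permutation sigma_i in G with sigma_i(0) = i.  The
   polynomials  row_x = sigma_i.f * x / x_i^d,  one for each monomial x of
   degree N, are N-homogeneous; their coefficient matrix A(f) in the monomial
   basis has entries that are coordinates of f.  Its determinant is thus a
   polynomial R in the coefficients of f, and R is nonzero because for
   f = x_0^d we get row_x = x, i.e. A(x_0^d) = 1.  Whenever R(f) != 0 the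
   rows span all N-homogeneous polynomials, so every x_j^N lies in the ideal
   generated by the sigma.f; hence the sigma.f have no common nontrivial zero
   over any extension field, and the cyclic shifts of f form a homogeneous
   system of parameters. *)

From HB Require Import structures.
From mathcomp Require Import all_boot all_order all_algebra all_fingroup.
From mathcomp Require Import mpoly.
Import GRing.Theory.
Local Open Scope ring_scope.

Section PolyFacts.
Variables (K : fieldType) (n : nat).
Implicit Types (p q : {mpoly K[n]}) (m : 'X_{1..n}).

Lemma mcoeffMX_shift p m mm :
  (p * 'X_[m])@_mm = if (m <= mm)%MM then p@_(mm - m)%MM else 0.
Proof.
case: ifP => le; first by rewrite -{1}(submK le) addmC mcoeffMX.
apply/eqP; rewrite -[_ == 0]negbK -mcoeff_msupp (perm_mem (msuppMX p m)).
apply/negP => /mapP [m' _ E]; move: le; rewrite E.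
by move/negbT/negP; apply; apply/mnm_lepP => i; rewrite mnmDE leq_addr.
Qed.

Lemma msym_homog d (s : 'S_n) p : p \is d.-homog -> msym s p \is d.-homog.
Proof.
move=> /dhomogP h; apply/dhomogP => m; rewrite mcoeff_msupp mcoeff_sym.
by rewrite -mcoeff_msupp => /h <-; exact: (esym (mdeg_mperm _ _)).
Qed.

Lemma dhomog_eq d p q : p \is d.-homog -> q \is d.-homog ->
  (forall m, mdeg m = d -> p@_m = q@_m) -> p = q.
Proof.
move=> hp hq eq_pq; apply/mpolyP => m.
have [/eq_pq //|ne] := eqVneq (mdeg m) d.
by rewrite (dhomog_nemf_coeff hp ne) (dhomog_nemf_coeff hq ne).
Qed.

End PolyFacts.

Lemma ideal_powers_common_zeros (K : fieldType) (n r N : nat) (I : Type)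
    (g : I -> {mpoly K[n.+1]}) (c : 'I_r -> I) :
  (0 < N)%N -> (forall j : 'I_n.+1, in_ideal (g \o c) ('X_j ^+ N)) ->
  proj_common_zeros_empty g.
Proof.
move=> N_gt0 powers L iota v zero_v i; have [h hi] := powers i.
have := congr1 (fun p => (map_mpoly iota p).@[v]) hi => /=.
rewrite rmorphXn /= map_mpolyX rmorphXn /= mevalXU.
rewrite (rmorph_sum (map_mpoly iota)) (rmorph_sum (meval v)) big1.
  by move/eqP; rewrite expf_eq0 N_gt0 => /eqP.
by move=> k _; rewrite rmorphM /= mevalM zero_v mulr0.
Qed.

Section Monomials.
Variable n : nat.

Definition mnmOf {e} (x : Mon n e) : 'X_{1..n.+1} := bmnm (val x).

Lemma mdeg_mnmOf {e} (x : Mon n e) : mdeg (mnmOf x) = e.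
Proof. by case: x => [b /= /eqP ->]. Qed.

Lemma mnmOf_inj e : injective (@mnmOf e).
Proof. by move=> x y /val_inj /val_inj. Qed.

Lemma mnmOf_onto {e} {m : 'X_{1..n.+1}} :
  mdeg m = e -> exists x : Mon n e, mnmOf x = m.
Proof.
move=> h; have hb : (mdeg m < e.+1)%N by rewrite h.
have hm : mdeg (bmnm (BMultinom hb)) == e by rewrite /= h.
by exists (exist _ (BMultinom hb) hm).
Qed.

Lemma exists_pivot d : (0 < d)%N -> forall x : Mon n (n.+1 * d),
  exists i, (d <= mnmOf x i)%N.
Proof.
move=> d_gt0 x; case: (pickP (fun i => d <= mnmOf x i)%N) => [i hi|none].
  by exists i.
have : (\sum_i mnmOf x i <= \sum_(i : 'I_n.+1) d.-1)%N.
  apply: leq_sum => i _; have := none i; rewrite /= => /negbT.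
  by rewrite -ltnNge => lt; rewrite -ltnS (prednK d_gt0).
rewrite -mdegE mdeg_mnmOf sum_nat_const card_ord leqNgt => /negP; case.
by rewrite ltn_pmul2l // ltn_predL.
Qed.

(* The coefficient of the monomial m in a coefficient vector cv indexed by
   the degree-d monomials (0 if m has another degree). *)
Definition coef_at {R : nzRingType} {d} (cv : 'I_#|{: Mon n d}| -> R)
    (m : 'X_{1..n.+1}) : R :=
  if [pick j | mnmOf (enum_val j) == m] is Some j then cv j else 0.

Lemma coef_at_coeffs (K : fieldType) d (f : {mpoly K[n.+1]}) m :
  mdeg m = d -> coef_at (coeffs (d := d) f) m = f@_m.
Proof.
rewrite /coef_at => hm; case: pickP => [j /eqP <- //|none].
have [y hy] := mnmOf_onto hm.
by move: (none (enum_rank y)); rewrite enum_rankK hy eqxx.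
Qed.

End Monomials.

Arguments mnmOf {n e}.
Arguments mdeg_mnmOf {n e}.
Arguments mnmOf_onto {n e m}.
Arguments coef_at {n R d}.

Section Macaulay.
Variables (K : fieldType) (n d : nat).
Local Notation N := (n.+1 * d)%N.
Local Notation MN := (Mon n N).
Local Notation M := #|{: Mon n d}|.

Variable sigma : 'I_n.+1 -> 'S_n.+1.
Hypothesis sigma0 : forall i, sigma i ord0 = i.
Variable pivot : MN -> 'I_n.+1.
Hypothesis pivotP : forall x, (d <= mnmOf x (pivot x))%N.

Definition cofactor x : 'X_{1..n.+1} := (mnmOf x - U_(pivot x) *+ d)%MM.

Lemma cofactorK x : (cofactor x + U_(pivot x) *+ d = mnmOf x)%MM.
Proof.
apply: submK; apply/mnm_lepP => i; rewrite mulmnE mnm1E.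
by case: eqP => [<-|_]; rewrite ?mul1n ?mul0n.
Qed.

Lemma mdeg_cofactor x : (mdeg (cofactor x) + d = N)%N.
Proof. by rewrite -(mdeg_mnmOf x) -(cofactorK x) mdegD mdegMn mdeg1 mul1n. Qed.

Definition macaulay_row (f : {mpoly K[n.+1]}) x :=
  msym (sigma (pivot x)) f * 'X_[cofactor x].

Lemma macaulay_row_homog f x : f \is d.-homog -> macaulay_row f x \is N.-homog.
Proof.
move=> hf; rewrite -(mdeg_cofactor x) addnC.
by apply: dhomogM; [exact: msym_homog | rewrite dhomogX].
Qed.

Definition macaulay_mx {R : nzRingType} (cv : 'I_M -> R) : 'M[R]_#|{: MN}| :=
  \matrix_(a, b)
    let x := enum_val a in let y := enum_val b in
    if (cofactor x <= mnmOf y)%MM then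
      coef_at cv [multinom (mnmOf y - cofactor x)%MM (sigma (pivot x) i) | i < n.+1]
    else 0.

(* On the coefficients of f the Macaulay matrix is the coefficient matrix of
   the rows (the entries read off have degree d automatically). *)
Lemma macaulay_mxE f a b :
  macaulay_mx (coeffs f) a b =
  (macaulay_row f (enum_val a))@_(mnmOf (enum_val b)).
Proof.
rewrite mxE /macaulay_row mcoeffMX_shift; case: ifP => le //.
rewrite mcoeff_sym coef_at_coeffs // mdeg_mperm.
apply/eqP; rewrite -(eqn_add2r (mdeg (cofactor (enum_val a)))).
by rewrite -mdegD submK // mdeg_mnmOf addnC mdeg_cofactor.
Qed.

Definition resultant : {mpoly K[M]} := \det (macaulay_mx (fun j => 'X_j)).

Lemma resultantE cv : resultant.@[cv] = \det (macaulay_mx cv).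
Proof.
rewrite /resultant -det_map_mx; congr (\det _); apply/matrixP => a b.
rewrite !mxE /=; case: ifP => _; last exact: meval0.
by rewrite /coef_at; case: pickP => [j _|_]; [exact: mevalXU | exact: meval0].
Qed.

(* For f = x_0^d each row is its own monomial. *)
Lemma macaulay_mx_X0 : macaulay_mx (coeffs ('X_ord0 ^+ d : {mpoly K[n.+1]})) = 1%:M.
Proof.
apply/matrixP => a b; rewrite macaulay_mxE mxE /macaulay_row mpolyXn msymX -mpolyXD.
set m := (X in 'X_[X]); have -> : m = mnmOf (enum_val a).
  rewrite -(cofactorK (enum_val a)) addmC /m; apply/mnmP => i.
  rewrite !mnmE !mulmnE !mnmE -(inj_eq (@perm_inj _ (sigma (pivot (enum_val a))))).
  by rewrite permKV sigma0 eq_sym.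
by rewrite mcoeffX (inj_eq (@mnmOf_inj _ _)) (inj_eq enum_val_inj).
Qed.

(* The resultant is a nonzero polynomial, being 1 at the form x_0^d. *)
Lemma resultant_neq0 : resultant != 0.
Proof.
apply: contraNneq (oner_neq0 K) => R0.
by rewrite -(det1 K #|{: MN}|) -macaulay_mx_X0 -resultantE R0 meval0.
Qed.

Lemma rows_span f : f \is d.-homog -> resultant.@[coeffs f] != 0 ->
  forall z : MN, exists u : 'rV[K]_#|{: MN}|,
    \sum_a u 0 a *: macaulay_row f (enum_val a) = 'X_[mnmOf z].
Proof.
move=> hf hR z; set A := macaulay_mx (coeffs f).
have uA : A \in unitmx by rewrite unitmxE unitfE -resultantE.
exists (delta_mx 0 (enum_rank z) *m invmx A).
apply: (@dhomog_eq _ _ N); last move=> _ /mnmOf_onto [y <-].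
- by apply: rpred_sum => a _; apply: rpredZ; exact: macaulay_row_homog.
- by rewrite dhomogX; apply/eqP; exact: mdeg_mnmOf.
rewrite mcoeffX raddf_sum /=; under eq_bigr do rewrite mcoeffZ.
rewrite -[y in mnmOf y](enum_rankK y); under eq_bigr do rewrite -macaulay_mxE.
have := congr1 (fun B : 'rV_#|{: MN}| => B 0 (enum_rank y)) (mulmxKV uA
  (delta_mx 0 (enum_rank z))); rewrite !mxE -/A => ->.
by rewrite enum_rankK (inj_eq (@mnmOf_inj _ _)) (inj_eq enum_rank_inj) eq_sym.
Qed.

Lemma rows_in_ideal f (u : 'rV[K]_#|{: MN}|) :
  in_ideal (fun i => msym (sigma i) f) (\sum_a u 0 a *: macaulay_row f (enum_val a)).
Proof.
exists (fun i => \sum_(a | pivot (enum_val a) == i) u 0 a *: 'X_[cofactor (enum_val a)]).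
rewrite (partition_big (fun a => pivot (enum_val a)) xpredT) //=.
apply: eq_bigr => i _; rewrite mulr_suml; apply: eq_bigr => a /eqP <-.
by rewrite -scalerAl /macaulay_row mulrC.
Qed.

Lemma powers_in_ideal f : f \is d.-homog -> resultant.@[coeffs f] != 0 ->
  forall j : 'I_n.+1, in_ideal (fun i => msym (sigma i) f) ('X_j ^+ N).
Proof.
move=> hf hR j; have [z hz] : exists z : MN, mnmOf z = (U_(j) *+ N)%MM.
  by apply: mnmOf_onto; rewrite mdegMn mdeg1 mul1n.
have [u hu] := rows_span _ hf hR z.
by rewrite mpolyXn -hz -hu; exact: rows_in_ideal.
Qed.

End Macaulay.

Lemma cshiftX0 n (k : 'I_n.+1) : (cshift n ^+ k)%g ord0 = k.
Proof.
have iterE m : val (iter m (cshift n) ord0) = (m %% n.+1)%N.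
  elim: m => [|m IH] /=; first by rewrite mod0n.
  by rewrite /cshift permE /= IH -addn1 modnDml addn1.
by rewrite permX; apply: val_inj; rewrite iterE modn_small.
Qed.

Lemma transitive_cover n (G : {group 'S_n.+1}) :
  [transitive G, on [set: 'I_n.+1] | 'P] ->
  exists c : 'I_n.+1 -> {s : 'S_n.+1 | s \in G}, forall i, val (c i) ord0 = i.
Proof.
move=> tG; have cover i : exists s : {s : 'S_n.+1 | s \in G}, val s ord0 = i.
  have : i \in orbit 'P G ord0 by rewrite (atransP tG) ?inE.
  by case/orbitP => s sG <-; exists (exist _ s sG).
exact: fin_all_exists cover.
Qed.

Theorem corollary1p4 (K : fieldType) (n d : nat) :
  infinite_type K -> (1 <= n)%N -> (1 <= d)%N ->
  (forall G : {group 'S_n.+1},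
     [transitive G, on [set: 'I_n.+1] | 'P] ->
     exists P : {mpoly K[#|{: Mon n d}|]}, P != 0 /\
       forall f : {mpoly K[n.+1]},
         f \is d.-homog -> f != 0 -> P.@[coeffs f] != 0 ->
         proj_common_zeros_empty (fun s : {s : 'S_n.+1 | s \in G} => pact (val s) f))
  /\
  (exists P : {mpoly K[#|{: Mon n d}|]}, P != 0 /\
     forall f : {mpoly K[n.+1]},
       f \is d.-homog -> f != 0 -> P.@[coeffs f] != 0 ->
       hsop (fun k : 'I_n.+1 => pact (cshift n ^+ k) f)).
Proof.
move=> _ _ d_gt0; have [pivot pivotP] := fin_all_exists (exists_pivot n d d_gt0).
have N_gt0 : (0 < n.+1 * d)%N by rewrite muln_gt0.
split=> [G /transitive_cover [c c0]|].
  exists (resultant K n d (fun i => val (c i)) pivot); split.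
    exact: (@resultant_neq0 K n d (fun i => val (c i)) c0 pivot pivotP).
  move=> f hf _ hR; apply: (@ideal_powers_common_zeros _ _ _ _ _ _ c N_gt0).
  exact: powers_in_ideal pivotP f hf hR.
exists (resultant K n d (fun k : 'I_n.+1 => (cshift n ^+ k)%g) pivot); split.
  exact: (@resultant_neq0 K n d _ (cshiftX0 n) pivot pivotP).
move=> f hf _ hR; split=> [k|j]; first by exists d; split=> //; exact: msym_homog.
have := @powers_in_ideal K n d (fun k => cshift n ^+ k)%g pivot pivotP f hf hR j.
by exists (n.+1 * d)%N.
Qed.
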